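(* Let $\gamma>0$, $p\geq1$, and $B\geq A$ be real numbers. Let $(a,b)\subseteq\mathbb{R}$ be an interval, and let $v:\mathcal{D}\cap(a,b)\to[A,B]$ be a function. Assume there exist two integers $\alpha,\beta$ with $a<\alpha<\beta<b$ such that $v(\alpha)=A$ and $v(\beta)=B$. Then for every $\delta\in[1/2,1]$ and every real number $\lambda\geq2^{1+\gamma/p}(B-A)$, $$DF_{\gamma,p,\lambda}(\delta,v,(a,b))\geq\frac{1}{2^{\gamma+1}-1}\cdot\frac{1}{\lambda^p\delta^{p+\gamma}}\cdot\frac{(B-A)^p}{(\beta-\alpha)^{p-1}}.$$
   Context: Let $\psi_{\gamma,p,\lambda}(\delta,\Delta)=1$ if $\Delta>\lambda\delta^{1+\gamma/p}$ and $0$ otherwise, for $(\delta,\Delta)\in[0,\infty)^2$. Let $\mathcal{D}=\{i/2^k:i\in\mathbb{Z},k\in\mathbb{N}\}$ be the dyadic numbers. For an interval $(a,b)$ and integer $k\geq0$, let $\mathcal{D}_k(a,b)=\{i\in\mathbb{Z}:[i/2^k,(i+1)/2^k]\subseteq(a,b)\}$. For $\delta>0$ and $v:\mathcal{D}\cap(a,b)\to\mathbb{R}$, the dyadic functional is $$DF_{\gamma,p,\lambda}(\delta,v,(a,b))=\sum_{k=0}^\infty\frac{1}{2^{k(\gamma+1)}}\sum_{i\in\mathcal{D}_k(a,b)}\psi_{\gamma,p,\lambda}\!\left(\frac{\delta}{2^k},\left|v\!\left(\tfrac{i+1}{2^k}\right)-v\!\left(\tfrac{i}{2^k}\right)\right|\right).$$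 *)

From HB Require Import structures.
From mathcomp Require Import all_boot all_order all_algebra.
From mathcomp Require Import all_classical all_reals all_analysis.
Set Implicit Arguments. Unset Strict Implicit. Unset Printing Implicit Defensive.
Import Order.TTheory GRing.Theory Num.Theory.
Local Open Scope classical_set_scope.
Local Open Scope ring_scope.

Definition psi {R : realType} (gamma p lambda : R) (delta Delta : R) : R :=
  if lambda * delta `^ (1 + gamma / p) < Delta then 1 else 0.

Definition dyadic {R : realType} (x : R) : Prop :=
  exists (i : int) (k : nat), x = i%:~R / 2 ^+ k.

Definition Dk {R : realType} (k : nat) (a b : \bar R) : set int :=
  [set i : int | (a < ((i%:~R : R) / 2 ^+ k)%:E)%E /\
                 ((((i + 1)%:~R : R) / 2 ^+ k)%:E < b)%E].

Definition DF {R : realType} (gamma p lambda delta : R) (v : R -> R) (a b : \bar R)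
  : \bar R :=
  (\sum_(0 <= k <oo)
     (((2 : R) `^ (k%:R * (gamma + 1)))^-1)%:E *
     \esum_(i in Dk k a b)
        (psi gamma p lambda (delta / 2 ^+ k)
           `|v ((i + 1)%:~R / 2 ^+ k) - v (i%:~R / 2 ^+ k)|)%:E)%E.

(* Let s_k = lambda (delta/2^k)^(1+gamma/p) be the threshold at generation k and
   d_k(i) the jump of v over [i/2^k, (i+1)/2^k].  The potential Psi_k(i), equal to
   G = 2^(gamma+1) if d_k(i) > s_k and to (d_k(i)/s_k)^p otherwise, satisfies
     Psi_k(i) <= (G - 1) psi_k(i) + (Psi_(k+1)(2i) + Psi_(k+1)(2i+1)) / G:
   since s_(k+1) < s_k / 2, a large jump has a large half, and for a small jump
   d_k(i) <= d_(k+1)(2i) + d_(k+1)(2i+1), s_k = 2^(1+gamma/p) s_(k+1) and the convexity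
   of x^p produce exactly the factor G.  Unfolding this inequality along the dyadic
   tree below each unit interval of [alpha, beta] and letting the depth go to infinity
   gives DF >= (sum of the Psi_0) / (G - 1).  On these unit intervals
   d_0 <= B - A <= s_0, so Psi_0 = (d_0/s_0)^p, and the power-mean inequality together
   with sum d_0 >= v(beta) - v(alpha) = B - A concludes. *)

From mathcomp Require Import all_boot all_order all_algebra.
From mathcomp Require Import all_classical all_reals all_analysis.
From mathcomp Require Import ring lra.
Set Implicit Arguments. Unset Strict Implicit. Unset Printing Implicit Defensive.
Import Order.TTheory GRing.Theory Num.Theory.
Local Open Scope classical_set_scope.
Local Open Scope ring_scope.

Lemma ltz_exists_add (m n : int) : m < n -> exists2 k : nat, (0 < k)%N & n = m + k%:Z.
Proof.
move=> lt_mn; exists `|n - m|%N; first by rewrite absz_gt0 subr_eq0 gt_eqF.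
by rewrite gez0_abs ?subr_ge0 ?(ltW lt_mn) // addrCA subrr addr0.
Qed.

Section RealFacts.
Variable R : realType.

Lemma powR_gt1 (a x : R) : 1 < a -> 0 < x -> 1 < a `^ x.
Proof.
move=> a1 x0; rewrite /powR gt_eqF ?(lt_trans ltr01 a1) // expR_gt1.
by rewrite mulr_gt0 // ln_gt0.
Qed.

Lemma powR_div (x y r : R) : 0 <= x -> 0 <= y -> (x / y) `^ r = x `^ r / y `^ r.
Proof.
move=> x0 y0; rewrite powRM ?invr_ge0 // -powR_inv1 // powRAC powR_inv1 //.
exact: powR_ge0.
Qed.

Lemma powR_convex_comb (p t x y : R) : 1 <= p -> 0 <= t -> t <= 1 ->
  0 <= x -> 0 <= y -> (t * x + (1 - t) * y) `^ p <= t * x `^ p + (1 - t) * y `^ p.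
Proof.
move=> p1 t0 t1 x0 y0.
have := @convex_powR R p p1 (Itv01 t0 t1) x y.
by rewrite !inE /= !in_itv /= !andbT => /(_ x0 y0); rewrite !convRE.
Qed.

Lemma powR_mean_le (p : R) n (f : nat -> R) : 1 <= p -> (forall m, 0 <= f m) ->
  n.+1%:R * ((\sum_(m < n.+1) f m) / n.+1%:R) `^ p <= \sum_(m < n.+1) f m `^ p.
Proof.
move=> p1 f0; elim: n => [|n IH]; first by rewrite !big_ord1 mul1r divr1.
rewrite big_ord_recr [leRHS]big_ord_recr /=.
set S := \sum_(i < n.+1) f i.
have n2 : 0 < n.+2%:R :> R by rewrite ltr0n.
pose t : R := n.+1%:R / n.+2%:R.
have t0 : 0 <= t by rewrite divr_ge0.
have t1 : t <= 1 by rewrite ler_pdivrMr // mul1r ler_nat.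
have -> : (S + f n.+1) / n.+2%:R = t * (S / n.+1%:R) + (1 - t) * f n.+1.
  by rewrite /t; field; rewrite ?pnatr_eq0 /= ?gt_eqF ?ltr0n // ?ltr_pwDl.
have S0 : 0 <= S / n.+1%:R by rewrite divr_ge0 ?sumr_ge0.
apply: le_trans (ler_wpM2l (ltW n2) (powR_convex_comb p1 t0 t1 S0 (f0 _))) _.
have e1 : n.+2%:R * t = n.+1%:R by rewrite /t mulrCA divff ?pnatr_eq0 // mulr1.
have e2 : n.+2%:R * (1 - t) = 1 by rewrite mulrBr mulr1 e1 -natrB // subSn // subnn.
by rewrite mulrDr mulrA e1 mulrA e2 mul1r lerD2r.
Qed.

Lemma powR_sum_le (p : R) n (f : nat -> R) : 1 <= p -> (forall m, 0 <= f m) ->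
  (\sum_(m < n) f m) `^ p <= n%:R `^ (p - 1) * \sum_(m < n) f m `^ p.
Proof.
move=> p1 f0; have p0 : 0 < p := lt_le_trans ltr01 p1.
case: n => [|n]; first by rewrite !big_ord0 powR0 ?gt_eqF // mulr0.
have n0 : (0 : R) < n.+1%:R by rewrite ltr0n.
apply: le_trans (ler_wpM2l (powR_ge0 _ _) (powR_mean_le n p1 f0)).
have S0 : 0 <= (\sum_(m < n.+1) f m) / n.+1%:R by rewrite divr_ge0 ?sumr_ge0.
rewrite mulrA (mulrC _ n.+1%:R) mulr_powRB1 ?(ltW n0) // -powRM ?(ltW n0) //.
by rewrite mulrC divfK ?gt_eqF.
Qed.

Lemma sum_ord_blocks (F : nat -> R) L P :
  \sum_(t < L * P) F t = \sum_(m < L) \sum_(r < P) F (m * P + r)%N.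
Proof.
elim: L => [|L IH]; first by rewrite mul0n !big_ord0.
by rewrite mulSnr big_split_ord IH big_ord_recr.
Qed.

Lemma sum_le_esum (D : set int) (f : int -> R) (i0 : int) n :
  (forall i, 0 <= f i) -> (forall t, (t < n)%N -> D (i0 + t%:Z)) ->
  ((\sum_(t < n) f (i0 + t%:Z))%:E <= \esum_(i in D) (f i)%:E)%E.
Proof.
move=> f0 hD; apply: esum_ge; exists ((fun t : nat => i0 + t%:Z) @` `I_n).
  split; first exact/finite_image/finite_II.
  by move=> _ [t /= tn <-]; exact: hD.
rewrite fsbig_image; last by move=> x y _ _ /= /addrI/(congr1 absz).
by rewrite -fsbig_ord sumEFin.
Qed.

Lemma dist_le_width (A B x y : R) : A <= x <= B -> A <= y <= B -> `|x - y| <= B - A.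
Proof.
move=> /andP[Ax xB] /andP[Ay yB].
by rewrite ler_norml opprB !lerB.
Qed.

Lemma lee_geometric_gap (x K r : R) (y : \bar R) : `|r| < 1 ->
  (forall N, ((x - K * r ^+ N)%:E <= y)%E) -> (x%:E <= y)%E.
Proof.
move=> r1 hy; apply/lee_addgt0Pr => e e0.
have Kr0 : (fun N => K * r ^+ N) @ \oo --> 0.
  by rewrite -(mulr0 K); apply: cvgMl_tmp; exact: cvg_expr.
have [N _ /(_ N (leqnn N)) /= hN] := cvgr0_norm_lt _ Kr0 _ e0.
apply: le_trans (leeD (hy N) (lexx e%:E)); rewrite -EFinD lee_fin.
by rewrite -addrA lerDl addrC subr_ge0 (le_trans (ler_norm _)) ?ltW.
Qed.

End RealFacts.

Section DyadicFunctional.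
Variable R : realType.

Lemma Dk_int_interval (a b : \bar R) (alpha : int) L j t :
  (a < (alpha%:~R : R)%:E)%E -> (((alpha + L%:Z)%:~R : R)%:E < b)%E ->
  (t < L * 2 ^ j)%N -> Dk j a b (alpha * (2 ^ j)%N%:Z + t%:Z).
Proof.
move=> ha hb ht; have e0 : (0 : R) < 2 ^+ j by rewrite exprn_gt0.
have e2 : (((2 ^ j)%N%:Z)%:~R : R) = 2 ^+ j by rewrite -pmulrn natrX.
split.
  apply: lt_le_trans ha _; rewrite lee_fin ler_pdivlMr // intrD intrM e2.
  by rewrite lerDl -pmulrn ler0n.
apply: le_lt_trans _ hb; rewrite lee_fin ler_pdivrMr // !intrD intrM e2.
rewrite mulrDl -addrA lerD2l -!pmulrn -natrD -natrX -natrM ler_nat addn1.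
exact: ht.
Qed.

Lemma DF_ge0 (gamma p lambda delta : R) (v : R -> R) (a b : \bar R) :
  (0 <= DF gamma p lambda delta v a b)%E.
Proof.
apply: nneseries_ge0 => k _ _; apply: mule_ge0.
  by rewrite lee_fin invr_ge0 powR_ge0.
by apply: esum_ge0 => i _; rewrite lee_fin /psi; case: ifP.
Qed.

End DyadicFunctional.

Section DyadicTree.
Variables (R : realType) (gamma p lambda delta : R) (v : R -> R).
Hypotheses (gamma_gt0 : 0 < gamma) (p_ge1 : 1 <= p).
Hypotheses (lambda_gt0 : 0 < lambda) (delta_gt0 : 0 < delta).

Let p_gt0 : 0 < p := lt_le_trans ltr01 p_ge1.
Let G : R := 2 `^ (gamma + 1).
Let c : R := (G - 1)^-1.
Let rho : R := (2 `^ gamma)^-1.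

Definition threshold (k : nat) : R := lambda * (delta / 2 ^+ k) `^ (1 + gamma / p).

Definition jump (k : nat) (i : int) : R :=
  `|v ((i + 1)%:~R / 2 ^+ k) - v (i%:~R / 2 ^+ k)|.

Definition weight (k : nat) : R := (2 `^ (k%:R * (gamma + 1)))^-1.

Let flag k i := psi gamma p lambda (delta / 2 ^+ k) (jump k i).

Definition potential k i : R :=
  if threshold k < jump k i then G else (jump k i / threshold k) `^ p.

(* The part of DF coming from the descendants of [i/2^k, (i+1)/2^k] over n more
   generations. *)
Definition tree_sum k i n : R :=
  \sum_(j < n.+1) weight (k + j) * \sum_(r < 2 ^ j) flag (k + j) (i * (2 ^ j)%:Z + r%:Z).

Let G_gt1 : 1 < G.
Proof. by apply: powR_gt1; rewrite ?ltr1n ?addr_gt0. Qed.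

Let G_gt0 : 0 < G := lt_trans ltr01 G_gt1.

Let c_gt0 : 0 < c.
Proof. by rewrite invr_gt0 subr_gt0. Qed.

Let cG : c * G = 1 + c.
Proof. by rewrite -[G in LHS](subrK 1) mulrDr mulVf ?mulr1 // subr_eq0 gt_eqF. Qed.

Lemma flagE k i : flag k i = if threshold k < jump k i then 1 else 0.
Proof. by []. Qed.

Lemma flag_ge0 k i : 0 <= flag k i.
Proof. by rewrite flagE; case: ifP. Qed.

Lemma threshold_gt0 k : 0 < threshold k.
Proof. by rewrite mulr_gt0 // powR_gt0 // divr_gt0 // exprn_gt0. Qed.

Lemma threshold_succ k : threshold k = 2 `^ (1 + gamma / p) * threshold k.+1.
Proof.
rewrite /threshold mulrCA -powRM ?divr_ge0 ?exprn_ge0 ?ltW //.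
by rewrite exprS invfM mulrCA mulVKf.
Qed.

Lemma two_lt_threshold_ratio : 2 < 2 `^ (1 + gamma / p) :> R.
Proof.
rewrite powRD ?pnatr_eq0 ?implybT // powRr1 // ltr_pMr //.
by apply: powR_gt1; rewrite ?ltr1n ?divr_gt0.
Qed.

Lemma threshold0_powR : threshold 0 `^ p = lambda `^ p * delta `^ (p + gamma).
Proof.
rewrite /threshold expr0 divr1 powRM ?powR_ge0 ?ltW // -powRrM.
by rewrite mulrDl mul1r divfK ?gt_eqF // addrC.
Qed.

Lemma le_threshold0 x : 0 <= x -> 1 / 2 <= delta ->
  2 `^ (1 + gamma / p) * x <= lambda -> x <= threshold 0.
Proof.
move=> x0 delta_ge hx; rewrite /threshold expr0 divr1.
have q0 : 0 <= 1 + gamma / p by rewrite addr_ge0 ?divr_ge0 ?ltW.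
apply: le_trans (ler_wpM2r (powR_ge0 _ _) hx).
have delta2 : 1 <= 2 * delta by lra.
rewrite mulrAC -powRM ?(ltW delta_gt0) //; apply: ler_peMl x0 _.
by rewrite -[leLHS](powRr0 (2 * delta)); apply: ler_powR.
Qed.

Lemma jump_ge0 k i : 0 <= jump k i.
Proof. exact: normr_ge0. Qed.

Lemma jump_split k i : jump k i <= jump k.+1 (2 * i) + jump k.+1 (2 * i + 1).
Proof.
have halve (j : int) : ((2 * j)%:~R : R) / 2 ^+ k.+1 = j%:~R / 2 ^+ k.
  by rewrite intrM exprS invfM mulrACA divff ?pnatr_eq0 // mul1r.
rewrite /jump (_ : 2 * i + 1 + 1 = 2 * (i + 1)); last by ring.
by rewrite !halve [leRHS]addrC ler_distD.
Qed.

Lemma big_jump_child k i : threshold k < jump k i ->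
  threshold k.+1 < jump k.+1 (2 * i) \/ threshold k.+1 < jump k.+1 (2 * i + 1).
Proof.
move=> hk; case: (ltP (threshold k.+1) (jump k.+1 (2 * i))) => h1; first by left.
case: (ltP (threshold k.+1) (jump k.+1 (2 * i + 1))) => h2; first by right.
have := lt_le_trans hk (le_trans (jump_split k i) (lerD h1 h2)).
rewrite threshold_succ -mulr2n -(mulr_natl (threshold k.+1) 2) ltr_pM2r ?threshold_gt0 //.
by rewrite ltNge (ltW two_lt_threshold_ratio).
Qed.

Lemma potential_ge0 k i : 0 <= potential k i.
Proof. by rewrite /potential; case: ifP => _; [exact: ltW | exact: powR_ge0]. Qed.

Lemma potential_big k i : threshold k < jump k i -> potential k i = G.
Proof. by rewrite /potential => ->. Qed.

Lemma potential_small k i : jump k i <= threshold k ->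
  potential k i = (jump k i / threshold k) `^ p.
Proof. by rewrite /potential ltNge => ->. Qed.

Lemma potential_le1 k i : jump k i <= threshold k -> potential k i <= 1.
Proof.
move=> hk; have s0 := threshold_gt0 k; rewrite potential_small //.
have := @ge0_ler_powR R p (ltW p_gt0) (jump k i / threshold k) 1.
rewrite powR1 !nnegrE ler01 divr_ge0 ?jump_ge0 ?(ltW s0) //.
by apply => //; rewrite ler_pdivrMr // mul1r.
Qed.

Lemma potential_small_step k i : jump k i <= threshold k ->
  G * potential k i <= potential k.+1 (2 * i) + potential k.+1 (2 * i + 1).
Proof.
move=> hk; have GP : G * potential k i <= G.
  by rewrite ler_piMr ?(ltW G_gt0) ?potential_le1.
case: (ltP (threshold k.+1) (jump k.+1 (2 * i))) => h1.
  by rewrite (potential_big h1); apply: le_trans GP _; rewrite lerDl potential_ge0.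
case: (ltP (threshold k.+1) (jump k.+1 (2 * i + 1))) => h2.
  by rewrite (potential_big h2); apply: le_trans GP _; rewrite lerDr potential_ge0.
rewrite !potential_small //.
set x := jump k i / threshold k.
set x1 := jump k.+1 (2 * i) / threshold k.+1.
set x2 := jump k.+1 (2 * i + 1) / threshold k.+1.
have s1 := threshold_gt0 k.+1.
have x0 : 0 <= x by rewrite divr_ge0 ?jump_ge0 ?(ltW (threshold_gt0 k)).
have x10 : 0 <= x1 by rewrite divr_ge0 ?jump_ge0 ?(ltW s1).
have x20 : 0 <= x2 by rewrite divr_ge0 ?jump_ge0 ?(ltW s1).
have sum_ge : 2 `^ (1 + gamma / p) * x <= x1 + x2.
  rewrite /x threshold_succ invfM mulrCA mulVKf ?gt_eqF ?powR_gt0 //.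
  by rewrite /x1 /x2 -mulrDl ler_wpM2r ?invr_ge0 ?(ltW s1) ?jump_split.
have conv : (x1 + x2) `^ p <= 2 `^ (p - 1) * (x1 `^ p + x2 `^ p).
  have := @powR_sum_le R p 2 (fun m => if m == 0%N then x1 else x2) p_ge1.
  by rewrite !big_ord_recl !big_ord0 /= !addr0; apply=> -[|m].
have scale : 2 `^ (p - 1) * (G * x `^ p) = (2 `^ (1 + gamma / p) * x) `^ p.
  rewrite powRM ?powR_ge0 // -powRrM mulrDl mul1r divfK ?gt_eqF //.
  by rewrite mulrA -powRD ?pnatr_eq0 ?implybT //; congr (2 `^ _ * _); ring.
rewrite -(ler_pM2l (powR_gt0 (p - 1) (ltr0n _ 2))) scale; apply: le_trans conv.
apply: (ge0_ler_powR (ltW p_gt0)) sum_ge.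
  by rewrite nnegrE mulr_ge0 ?powR_ge0.
by rewrite nnegrE addr_ge0.
Qed.

Lemma potential_step k i : c * potential k i <=
  flag k i + c / G * (potential k.+1 (2 * i) + potential k.+1 (2 * i + 1)).
Proof.
rewrite flagE mulrAC -mulrA; case: ltP => hk.
  rewrite potential_big // cG lerD2l ler_pMr // ler_pdivlMr // mul1r.
  by case: (big_jump_child hk) => /potential_big ->;
    rewrite ?lerDl ?lerDr potential_ge0.
by rewrite add0r ler_pM2l // ler_pdivlMr // mulrC potential_small_step.
Qed.

Lemma weight_gt0 k : 0 < weight k.
Proof. by rewrite invr_gt0 powR_gt0. Qed.

Lemma weight0 : weight 0 = 1.
Proof. by rewrite /weight mul0r powRr0 invr1. Qed.

Lemma weight_succ k : weight k.+1 = weight k / G.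
Proof.
rewrite /weight -invfM -powRD ?pnatr_eq0 ?implybT //.
by rewrite -[k.+1]addn1 natrD mulrDl mul1r.
Qed.

Lemma tree_sum0 k i : tree_sum k i 0 = weight k * flag k i.
Proof. by rewrite /tree_sum !big_ord1 addn0 mulr1 addr0. Qed.

Lemma tree_sumS k i n : tree_sum k i n.+1 =
  weight k * flag k i + tree_sum k.+1 (2 * i) n + tree_sum k.+1 (2 * i + 1) n.
Proof.
rewrite {1}/tree_sum big_ord_recl -addrA; congr (_ + _).
  by rewrite big_ord1 /= addn0 mulr1 addr0.
rewrite /tree_sum -big_split; apply: eq_bigr => j _ /=.
rewrite /bump leq0n add1n addnS -addSn -mulrDr; congr (_ * _).
rewrite expnS mul2n -addnn big_split_ord /=; congr (_ + _); apply: eq_bigr => r _ /=.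
  by congr (flag _ _); rewrite PoszD; ring.
by congr (flag _ _); rewrite !PoszD; ring.
Qed.

Lemma tree_sum_ge n k i : c * weight k * (potential k i - rho ^+ n) <= tree_sum k i n.
Proof.
elim: n k i => [|n IH] k i.
  rewrite tree_sum0 expr0 (mulrC c) -mulrA ler_pM2l ?weight_gt0 // flagE.
  case: ltP => hk; first by rewrite potential_big // mulVf // subr_eq0 gt_eqF.
  by rewrite pmulr_rle0 // subr_le0 potential_le1.
rewrite tree_sumS.
apply: le_trans (lerD (lerD (lexx _) (IH k.+1 (2 * i))) (IH k.+1 (2 * i + 1))).
have rho_succ : rho ^+ n.+1 = rho ^+ n * 2 / G.
  rewrite exprS /rho /G powRD ?pnatr_eq0 ?implybT // powRr1 //.
  by field; rewrite gt_eqF ?powR_gt0.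
rewrite weight_succ rho_succ -subr_ge0.
set P := potential k i; set P1 := potential k.+1 _; set P2 := potential k.+1 _.
have -> : weight k * flag k i + c * (weight k / G) * (P1 - rho ^+ n) +
    c * (weight k / G) * (P2 - rho ^+ n) - c * weight k * (P - rho ^+ n * 2 / G) =
    weight k * (flag k i + c / G * (P1 + P2) - c * P).
  by field; rewrite gt_eqF.
by rewrite mulr_ge0 ?(ltW (weight_gt0 k)) // subr_ge0 potential_step.
Qed.

Lemma DF_ge_tree_sums (a b : \bar R) (alpha : int) L N :
  (a < (alpha%:~R : R)%:E)%E -> (((alpha + L%:Z)%:~R : R)%:E < b)%E ->
  ((\sum_(m < L) tree_sum 0 (alpha + m%:Z) N)%:E <= DF gamma p lambda delta v a b)%E.
Proof.
move=> ha hb.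
have -> : \sum_(m < L) tree_sum 0 (alpha + m%:Z) N = \sum_(j < N.+1)
    weight j * \sum_(t < L * 2 ^ j) flag j (alpha * (2 ^ j)%N%:Z + t%:Z).
  rewrite /tree_sum exchange_big /=; apply: eq_bigr => j _.
  rewrite -mulr_sumr (sum_ord_blocks (fun t => flag j (alpha * (2 ^ j)%N%:Z + t%:Z))).
  rewrite add0n; congr (_ * _).
  apply: eq_bigr => m _; apply: eq_bigr => r _; congr (flag _ _).
  by rewrite !PoszD PoszM; ring.
apply: le_trans (nneseries_lim_ge N.+1 _); last first.
  move=> k _ _; apply: mule_ge0; first by rewrite lee_fin ltW // weight_gt0.
  by apply: esum_ge0 => i _; rewrite lee_fin flag_ge0.
rewrite big_mkord -sumEFin; apply: lee_sum => j _.
rewrite EFinM; apply: lee_wpmul2l; first by rewrite lee_fin ltW // weight_gt0.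
apply: sum_le_esum => [i|t ht]; first exact: flag_ge0.
exact: Dk_int_interval ha hb ht.
Qed.

Lemma DF_ge_potentials (a b : \bar R) (alpha : int) L :
  (a < (alpha%:~R : R)%:E)%E -> (((alpha + L%:Z)%:~R : R)%:E < b)%E ->
  ((c * \sum_(m < L) potential 0 (alpha + m%:Z))%:E <= DF gamma p lambda delta v a b)%E.
Proof.
move=> ha hb; apply: (@lee_geometric_gap _ _ (c * L%:R) rho).
  by rewrite ger0_norm ?invr_ge0 ?powR_ge0 // invf_lt1 ?powR_gt0 // powR_gt1 ?ltr1n.
move=> N; apply: le_trans (DF_ge_tree_sums N ha hb); rewrite lee_fin.
have -> : c * \sum_(m < L) potential 0 (alpha + m%:Z) - c * L%:R * rho ^+ N =
    \sum_(m < L) c * weight 0 * (potential 0 (alpha + m%:Z) - rho ^+ N).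
  by rewrite weight0 mulr1 -mulr_sumr sumrB sumr_const card_ord -mulrA -mulrBr mulr_natl.
by apply: ler_sum => m _; exact: tree_sum_ge.
Qed.

Lemma jump0_le_width (A B : R) (a b : \bar R) (alpha : int) L m :
  (forall x : R, dyadic x -> (a < x%:E)%E -> (x%:E < b)%E -> A <= v x <= B) ->
  (a < (alpha%:~R : R)%:E)%E -> (((alpha + L%:Z)%:~R : R)%:E < b)%E ->
  (m < L)%N -> jump 0 (alpha + m%:Z) <= B - A.
Proof.
move=> hv ha hb lt_mL.
have v_int (i : int) : alpha <= i <= alpha + L%:Z -> A <= v i%:~R <= B.
  move=> /andP[le_ai le_ib]; apply: hv; first by exists i, 0%N; rewrite expr0 divr1.
    by apply: lt_le_trans ha _; rewrite lee_fin ler_int.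
  by apply: le_lt_trans _ hb; rewrite lee_fin ler_int.
rewrite /jump expr0 !divr1; apply: dist_le_width; apply: v_int.
  by rewrite -addrA lerDl lerD2l -PoszD lez_nat addn1.
by rewrite lerDl lerD2l !lez_nat leq0n ltnW.
Qed.

Lemma DF_ge_endpoint_jump (a b : \bar R) (alpha : int) L : (0 < L)%N ->
  (a < (alpha%:~R : R)%:E)%E -> (((alpha + L%:Z)%:~R : R)%:E < b)%E ->
  (forall m, (m < L)%N -> jump 0 (alpha + m%:Z) <= threshold 0) ->
  ((c * (`|v (alpha + L%:Z)%:~R - v alpha%:~R| / threshold 0) `^ p / L%:R `^ (p - 1))%:E
     <= DF gamma p lambda delta v a b)%E.
Proof.
move=> L0 ha hb small; apply: le_trans (DF_ge_potentials ha hb).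
have s0 := threshold_gt0 0.
rewrite lee_fin -mulrA ler_pM2l // ler_pdivrMr ?powR_gt0 ?ltr0n // [leRHS]mulrC.
rewrite (eq_bigr _ (fun m _ => potential_small (small _ (ltn_ord m)))).
have ratio_ge0 (m : nat) : 0 <= jump 0 (alpha + m%:Z) / threshold 0.
  by rewrite divr_ge0 ?jump_ge0 ?(ltW s0).
apply: le_trans (powR_sum_le L p_ge1 ratio_ge0).
apply: (ge0_ler_powR (ltW p_gt0)).
- by rewrite nnegrE divr_ge0 ?(ltW s0).
- by rewrite nnegrE sumr_ge0.
rewrite -mulr_suml ler_wpM2r ?invr_ge0 ?(ltW s0) //.
have -> : v (alpha + L%:Z)%:~R - v alpha%:~R =
    \sum_(0 <= m < L) (v (alpha + m.+1%:Z)%:~R - v (alpha + m%:Z)%:~R).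
  by rewrite (telescope_sumr (fun m : nat => v (alpha + m%:Z)%:~R)) // addr0.
rewrite big_mkord; apply: le_trans (ler_norm_sum _ _ _) _; apply: ler_sum => m _.
by rewrite /jump expr0 !divr1 -addrA -PoszD addn1.
Qed.

End DyadicTree.

Theorem proposition2p2 (R : realType) (gamma p A B : R) (a b : \bar R)
  (v : R -> R) (alpha beta : int) :
  0 < gamma -> 1 <= p -> A <= B ->
  (forall x : R, dyadic x -> (a < x%:E)%E -> (x%:E < b)%E -> A <= v x <= B) ->
  (a < (alpha%:~R : R)%:E)%E -> alpha < beta -> ((beta%:~R : R)%:E < b)%E ->
  v alpha%:~R = A -> v beta%:~R = B ->
  forall delta lambda : R, 1 / 2 <= delta <= 1 ->
  (2 : R) `^ (1 + gamma / p) * (B - A) <= lambda ->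
  ((((2 : R) `^ (gamma + 1) - 1)^-1 * (lambda `^ p * delta `^ (p + gamma))^-1 *
     ((B - A) `^ p / (beta%:~R - alpha%:~R) `^ (p - 1)))%:E
   <= DF gamma p lambda delta v a b)%E.
Proof.
move=> gamma_gt0 p_ge1 leAB hv ha lt_ab hb vA vB delta lambda /andP[delta_ge _] hlambda.
have p_gt0 : 0 < p := lt_le_trans ltr01 p_ge1.
have [<-|neAB] := eqVneq A B.
  by rewrite subrr powR0 ?gt_eqF // mul0r mulr0 DF_ge0.
have delta_gt0 : 0 < delta by apply: lt_le_trans delta_ge; rewrite divr_gt0.
have lambda_gt0 : 0 < lambda.
  by apply: lt_le_trans hlambda; rewrite mulr_gt0 ?powR_gt0 // subr_gt0 lt_neqAle neAB.
have BA_ge0 : 0 <= B - A by rewrite subr_ge0.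
have BA_le := le_threshold0 gamma_gt0 p_ge1 delta_gt0 BA_ge0 delta_ge hlambda.
have [L L_gt0 beta_eq] := ltz_exists_add lt_ab; subst beta.
have := DF_ge_endpoint_jump gamma_gt0 p_ge1 lambda_gt0 delta_gt0 L_gt0 ha hb
  (fun m lt_mL => le_trans (jump0_le_width hv ha hb lt_mL) BA_le).
rewrite vA vB ger0_norm // powR_div ?(le_trans BA_ge0) // threshold0_powR //.
rewrite intrD addrAC subrr add0r -pmulrn.
by apply: le_trans; rewrite lee_fin le_eqVlt; apply/orP; left; apply/eqP; ring.
Qed.
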